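(* Let $b>1$ and suppose $P$ satisfies $(1/2,b)$-multiplicative-expansion on $\mathcal{X}$. Suppose moreover that the following implication (constant-expansion guarantee) holds for classifiers $G$: whenever $P$ satisfies $(c,\rho)$-constant-expansion for some $c$, $\mathcal{R}_{\mathcal{A}}(G)<\rho$, and $\min_i P(\{x: G(x)=i\})>2\max\{c,\mathcal{R}_{\mathcal{A}}(G)\}$, there is a permutation $\pi:[K]\to[K]$ with $P(\{x:\pi(G(x))\neq G^*(x)\})\le \max\{c,\mathcal{R}_{\mathcal{A}}(G)\}+\mathcal{R}_{\mathcal{A}}(G)$. If a classifier $G:\mathcal{X}\to[K]$ satisfies $$\min_{i\in[K]}\mathbb{E}_P[\mathbf{1}(G(x)=i)]>\max\left\{\tfrac{2}{b-1},2\right\}\mathcal{R}_{\mathcal{A}}(G),$$ then $\mathrm{Err}_{\mathrm{unsup}}(G)\le\max\left\{\tfrac{b}{b-1},2\right\}\mathcal{R}_{\mathcal{A}}(G)$.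
   Context: $P$ is a distribution on $\mathcal{X}$ with ground-truth labelling $G^*:\mathcal{X}\to[K]$, $\mathcal{Q}_i:=\{x:G^*(x)=i\}$, $P_i(S)=P(S\cap\mathcal{Q}_i)/P(\mathcal{Q}_i)$. With augmentation maps $\mathcal{T}_{wa}$ and radius $r$: $\mathcal{A}(x):=\{x':\exists T\in\mathcal{T}_{wa},\ \|x'-T(x)\|\le r\}$, $\mathcal{N}(x):=\{x':\mathcal{A}(x)\cap\mathcal{A}(x')\neq\emptyset\}$, $\mathcal{N}(S):=\bigcup_{x\in S}\mathcal{N}(x)$, $\mathcal{N}^*(S):=\bigcup_{i}(\mathcal{N}(S\cap\mathcal{Q}_i)\cap\mathcal{Q}_i)$. $(a,b)$-multiplicative-expansion: for every $i$ and $S\subseteq\mathcal{Q}_i$ with $P_i(S)\le a$, $P_i(\mathcal{N}(S))\ge\min\{bP_i(S),1\}$. $(c,\rho)$-constant-expansion: for every $S$ with $P(S)\ge c$ and $P(S\cap\mathcal{Q}_i)\le P(\mathcal{Q}_i)/2$ for all $i$, $P(\mathcal{N}^*(S)\setminus S)\ge\min\{\rho,P(S)\}$. Consistency regularization loss: $\mathcal{R}_{\mathcal{A}}(G):=\mathbb{E}_{x\sim P}[\mathbf{1}(\exists x'\in\mathcal{A}(x)\text{ with }G(x')\neq G(x))]$. Unsupervised error: $\mathrm{Err}_{\mathrm{unsup}}(G):=\min_{\pi}P(\{x:\pi(G(x))\neq G^*(x)\})$, minimum over permutations $\pi$ of $[K]$. *)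

From HB Require Import structures.
From mathcomp Require Import all_boot all_order all_algebra fingroup perm.
From mathcomp Require Import all_classical all_reals all_analysis.
Set Implicit Arguments. Unset Strict Implicit. Unset Printing Implicit Defensive.
Import Order.TTheory GRing.Theory Num.Theory numFieldNormedType.Exports.
Local Open Scope classical_set_scope.
Local Open Scope ring_scope.

Section Expansion.
Variable R : realType.
Variable X : normedModType R.
Variable mX : set (set X).
Notation XT := (g_sigma_algebraType mX).
Variable P : probability XT R.
Variable K : nat.
Variable Gstar : X -> 'I_K.
Variable Twa : set (X -> X).
Variable r : R.

Definition Pr (S : set XT) : R := fine (P S).

Definition Qcl (i : 'I_K) : set XT := Gstar @^-1` [set i].

Definition Pcl (i : 'I_K) (S : set XT) : R := Pr (S `&` Qcl i) / Pr (Qcl i).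

Definition Aug (x : X) : set X :=
  [set x' | exists T, Twa T /\ `|x' - T x| <= r].

Definition Nbr (x : X) : set X := [set x' | Aug x `&` Aug x' !=set0].

Definition NbrS (S : set X) : set X := \bigcup_(x in S) Nbr x.

Definition NbrStar (S : set X) : set X :=
  \bigcup_(i in [set: 'I_K]) (NbrS (S `&` Qcl i) `&` Qcl i).

Definition mult_expansion (a b : R) : Prop :=
  forall (i : 'I_K) (S : set XT), measurable S -> S `<=` Qcl i ->
    Pcl i S <= a -> Pcl i (NbrS S) >= Num.min (b * Pcl i S) 1.

Definition const_expansion (c rho : R) : Prop :=
  forall S : set XT, measurable S -> Pr S >= c ->
    (forall i : 'I_K, Pr (S `&` Qcl i) <= Pr (Qcl i) / 2) ->
    Pr (NbrStar S `\` S) >= Num.min rho (Pr S).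

Definition inconsistent (G : X -> 'I_K) : set X :=
  [set x | exists x', Aug x x' /\ G x' <> G x].

Definition RA (G : X -> 'I_K) : R := Pr (inconsistent G).

Definition classifier_meas (G : X -> 'I_K) : Prop :=
  (forall i : 'I_K, measurable (G @^-1` [set i] : set XT)) /\
  measurable (inconsistent G : set XT).

Definition min_class_mass (G : X -> 'I_K) : R :=
  \big[Num.min/1]_(i < K) Pr (G @^-1` [set i]).

Definition perm_err (G : X -> 'I_K) (pi : {perm 'I_K}) : R :=
  Pr [set x | pi (G x) <> Gstar x].

Definition Err_unsup (G : X -> 'I_K) : R :=
  \big[Num.min/1]_(pi : {perm 'I_K}) perm_err G pi.

End Expansion.

From HB Require Import structures.
From mathcomp Require Import all_boot all_order all_algebra fingroup perm.
From mathcomp Require Import all_classical all_reals all_analysis.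
From mathcomp Require Import unstable ring lra.
Import Order.TTheory GRing.Theory Num.Theory numFieldNormedType.Exports.
Local Open Scope classical_set_scope.
Local Open Scope ring_scope.

(* Multiplicative expansion implies constant expansion with rate
   k = min(b - 1, 1): if S fills at most half of every class Q_i, then either
   N(S /\ Q_i) has P_i-mass at least b P_i(S), so it gains (b - 1) P(S /\ Q_i)
   outside S, or it covers Q_i, so it gains the other half of Q_i.  Summing
   over the classes gives (c, k c)-constant expansion for every c.  The
   guarantee applied with c > R_A(G) / k, which the class-mass hypothesis
   permits for c close to R_A(G) / k, yields Err_unsup(G) <= c + R_A(G); the
   constants of the statement are 2 / k and 1 + 1 / k. *)

Lemma bigsetU_ord (T : Type) n (F : 'I_n -> set T) :
  \big[setU/set0]_(i < n) F i = \bigcup_i F i.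
Proof.
rewrite -bigcup_seq; apply: eq_bigcupl; split=> i // _; exact: mem_index_enum.
Qed.

Lemma ler_gtP_bounded (R : realFieldType) (x y u : R) :
  y < u -> (forall z, y < z < u -> x <= z) -> x <= y.
Proof.
move=> yu xz; apply/ler_gtP => z yz.
have /xz : y < Num.min z ((y + u) / 2) < u.
  by rewrite lt_min yz gt_min; apply/andP; split; [lra | apply/orP; right; lra].
by move/le_trans; apply; rewrite ge_min lexx.
Qed.

Lemma maxr_2div_subr1 (R : realFieldType) (b : R) : 1 < b ->
  Num.max (2 / (b - 1)) 2 = 2 / Num.min (b - 1) 1.
Proof.
move=> b1; have b10 : 0 < b - 1 by rewrite subr_gt0.
have [bl|bg] := leP (b - 1) 1.
  by rewrite max_l // ler_pdivlMr //; lra.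
by rewrite max_r ?divr1 // ler_pdivrMr //; lra.
Qed.

Lemma maxr_div_subr1 (R : realFieldType) (b : R) : 1 < b ->
  Num.max (b / (b - 1)) 2 = 1 + 1 / Num.min (b - 1) 1.
Proof.
move=> b1; have b10 : 0 < b - 1 by rewrite subr_gt0.
have [bl|bg] := leP (b - 1) 1.
  by rewrite max_l; [field; lra | rewrite ler_pdivlMr //; lra].
by rewrite max_r ?divr1; [lra | rewrite ler_pdivrMr //; lra].
Qed.

Section Probability.
Context {R : realType} {X : normedModType R} {mX : set (set X)}.
Variable P : probability (g_sigma_algebraType mX) R.
Notation XT := (g_sigma_algebraType mX).

Lemma PrE (A : set XT) : measurable A -> (Pr P A)%:E = P A.
Proof. by move=> mA; rewrite /Pr fineK // fin_num_measure. Qed.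

Lemma Pr_ge0 (A : set XT) : 0 <= Pr P A.
Proof. by rewrite /Pr fine_ge0. Qed.

Lemma Pr_le_setU (A U V : set XT) :
  measurable A -> measurable U -> measurable V ->
  A `<=` U `|` V -> Pr P A <= Pr P U + Pr P V.
Proof.
move=> mA mU mV AUV; rewrite -lee_fin EFinD !PrE //.
apply: le_trans (measureU2 _ mU mV).
by rewrite le_measure // inE //; exact: measurableU.
Qed.

Lemma Pr_bigsetU n (F : 'I_n -> set XT) :
  (forall i, measurable (F i)) -> trivIset setT F ->
  Pr P (\big[setU/set0]_(i < n) F i) = \sum_(i < n) Pr P (F i).
Proof.
move=> mF tF; apply: EFin_inj; rewrite PrE; last exact: bigsetU_measurable.
rewrite -sumEFin (measure_bigsetU_ord P xpredT mF tF).
by apply: eq_bigr => i _; rewrite PrE.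
Qed.

End Probability.

Section Expansion.
Context {R : realType} {X : normedModType R} {mX : set (set X)}.
Context {P : probability (g_sigma_algebraType mX) R}.
Context {K : nat} {Gstar : X -> 'I_K} {Twa : set (X -> X)} {r : R}.
Notation XT := (g_sigma_algebraType mX).
Notation Q := (Qcl (mX:=mX) Gstar).
Notation N S := (NbrS Twa r S : set XT).
Hypothesis mQ : forall i, measurable (Q i).
Hypothesis mN : forall S : set XT, measurable S -> measurable (N S).
Context {b : R}.
Hypothesis Hmult : mult_expansion P Gstar Twa r (1 / 2) b.

Lemma trivIset_sub_Qcl (F : 'I_K -> set XT) :
  (forall i, F i `<=` Q i) -> trivIset setT F.
Proof. by move=> FQ i j _ _ [x [/FQ <- /FQ <-]]. Qed.

Lemma bigsetU_setI_Qcl (S : set XT) : \big[setU/set0]_(i < K) (S `&` Q i) = S.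
Proof.
rewrite bigsetU_ord; apply/seteqP; split=> [x [i _ []] //|x Sx].
by exists (Gstar x).
Qed.

Lemma NbrStar_setD (S : set XT) :
  (NbrStar mX Gstar Twa r S : set XT) `\` S =
  \big[setU/set0]_(i < K) ((N (S `&` Q i) `&` Q i) `\` S).
Proof. by rewrite bigsetU_ord /NbrStar setD_bigcupl. Qed.

Lemma mult_expansion_Pr (T : set XT) i :
  measurable T -> T `<=` Q i ->
  Pr P T <= Pr P (Q i) / 2 ->
  Num.min (b * Pr P T) (Pr P (Q i)) <= Pr P (N T `&` Q i).
Proof.
move=> mT TQ Thalf; set q := Pr P (Q i) in Thalf *.
have [->|qn0] := eqVneq q 0; first by rewrite ge_min Pr_ge0 orbT.
have qp : 0 < q by rewrite lt_def qn0 Pr_ge0.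
have := Hmult i T mT TQ; rewrite /Pcl (setIidl TQ) -/q.
have Thalf' : Pr P T / q <= 1 / 2 by rewrite ler_pdivrMr //; lra.
move/(_ Thalf'); rewrite ler_pdivlMr //.
by rewrite minr_pMl ?(ltW qp) // mul1r -mulrA divfK.
Qed.

Lemma class_expansion k (S : set XT) i :
  k <= b - 1 -> k <= 1 ->
  measurable S -> Pr P (S `&` Q i) <= Pr P (Q i) / 2 ->
  k * Pr P (S `&` Q i) <= Pr P ((N (S `&` Q i) `&` Q i) `\` S).
Proof.
move=> kb k1 mS Shalf; have mSQ := measurableI _ _ mS (mQ i).
have mNQ : measurable (N (S `&` Q i) `&` Q i) by apply: measurableI; auto.
have N_le : Pr P (N (S `&` Q i) `&` Q i) <=
            Pr P ((N (S `&` Q i) `&` Q i) `\` S) + Pr P (S `&` Q i).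
  apply: Pr_le_setU => //; first exact: measurableD.
  by move=> x [Nx Qx]; have [Sx|nSx] := pselect (S x); [right | left].
have := Pr_ge0 P (S `&` Q i).
have := @mult_expansion_Pr _ i mSQ (@subIsetr _ _ _) Shalf.
by rewrite ge_min => /orP[] ?; nra.
Qed.

Lemma const_expansion_of_mult k c rho :
  0 <= k -> k <= b - 1 -> k <= 1 ->
  rho <= k * c -> const_expansion P Gstar Twa r c rho.
Proof.
move=> k0 kb k1 rhoc S mS Sc Shalf.
have mSQ i := measurableI _ _ mS (mQ i).
rewrite NbrStar_setD Pr_bigsetU; first last.
- by apply: trivIset_sub_Qcl => i x [[]].
- by move=> i; apply: measurableD => //; apply: measurableI; auto.
apply: (@le_trans _ _ (k * Pr P S)).
  by rewrite ge_min (le_trans rhoc) // ler_wpM2l.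
rewrite -{1}(bigsetU_setI_Qcl S) Pr_bigsetU //; last first.
  by apply: trivIset_sub_Qcl => i; exact: subIsetr.
by rewrite mulr_sumr; apply: ler_sum => i _; exact: class_expansion.
Qed.

Hypothesis Hguar : forall (G : X -> 'I_K) (c rho : R),
  classifier_meas mX Twa r G -> const_expansion P Gstar Twa r c rho ->
  RA P Twa r G < rho -> min_class_mass P G > 2 * Num.max c (RA P Twa r G) ->
  exists pi : {perm 'I_K},
    perm_err P Gstar G pi <= Num.max c (RA P Twa r G) + RA P Twa r G.

Lemma Err_unsup_le_of_guarantee (G : X -> 'I_K) k c :
  classifier_meas mX Twa r G -> 0 < k -> k <= b - 1 -> k <= 1 ->
  RA P Twa r G < k * c -> 2 * c < min_class_mass P G ->
  Err_unsup P Gstar G <= c + RA P Twa r G.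
Proof.
move=> HG k0 kb k1 RAc cm; have RA0 := Pr_ge0 P (inconsistent Twa r G).
have c0 : 0 < c by rewrite -(pmulr_rgt0 _ k0); exact: le_lt_trans RA0 RAc.
have cmax : Num.max c (RA P Twa r G) = c.
  by rewrite max_l // ltW // (lt_le_trans RAc) // ler_piMl // ltW.
have Hce := const_expansion_of_mult k c (k * c) (ltW k0) kb k1 (lexx _).
have cm' : 2 * Num.max c (RA P Twa r G) < min_class_mass P G by rewrite cmax.
have [pi] := Hguar G c (k * c) HG Hce RAc cm'.
by rewrite cmax; apply: le_trans; exact: bigmin_le.
Qed.

End Expansion.

Theorem lemma2 (R : realType) (X : normedModType R) (mX : set (set X))
  (P : probability (g_sigma_algebraType mX) R) (K : nat) (Gstar : X -> 'I_K)
  (Twa : set (X -> X)) (r : R) (b : R)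
  (HQ : forall i : 'I_K, measurable (Qcl (mX:=mX) Gstar i))
  (HN : forall S : set (g_sigma_algebraType mX),
      measurable S -> measurable (NbrS Twa r S : set (g_sigma_algebraType mX)))
  (Hb : 1 < b)
  (Hmult : mult_expansion P Gstar Twa r (1 / 2) b)
  (Hguar : forall (G : X -> 'I_K) (c rho : R),
      classifier_meas mX Twa r G ->
      const_expansion P Gstar Twa r c rho ->
      RA P Twa r G < rho ->
      min_class_mass P G > 2 * Num.max c (RA P Twa r G) ->
      exists pi : {perm 'I_K},
        perm_err P Gstar G pi <= Num.max c (RA P Twa r G) + RA P Twa r G)
  (G : X -> 'I_K) (HG : classifier_meas mX Twa r G)
  (Hmin : min_class_mass P G > Num.max (2 / (b - 1)) 2 * RA P Twa r G) :
  Err_unsup P Gstar G <= Num.max (b / (b - 1)) 2 * RA P Twa r G.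
Proof.
set R0 := RA P Twa r G in Hmin *; set m := min_class_mass P G in Hmin *.
set k := Num.min (b - 1) 1.
have k0 : 0 < k by rewrite lt_min subr_gt0 Hb ltr01.
have kb : k <= b - 1 by rewrite ge_min lexx.
have k1 : k <= 1 by rewrite ge_min lexx orbT.
rewrite maxr_2div_subr1 // -/k -mulrA in Hmin.
rewrite maxr_div_subr1 // -/k mulrDl !mul1r.
apply: (@ler_gtP_bounded _ _ _ (m / 2 + R0)); first by lra.
move=> z /andP[zl zu]; rewrite -(subrK R0 z).
apply: (Err_unsup_le_of_guarantee HQ HN Hmult Hguar G k _ HG k0 kb k1).
  by rewrite -/R0 -ltr_pdivrMl //; lra.
by rewrite -/m; lra.
Qed.
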